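(* $W_{\max}(20,9)\in\{4,5,\dots,34\}$.
   Context: A weighing matrix of order $n$ and weight $k$ is an $n\times n$ matrix $W$ with entries in $\{1,-1,0\}$ such that $WW^T=kI_n$. Two weighing matrices $W_1,W_2$ of order $n$ and weight $k$ are unbiased if $\frac{1}{\sqrt{k}}W_1W_2^T$ is also a weighing matrix of order $n$ and weight $k$; a set is mutually unbiased if any two distinct members are unbiased. $W_{\max}(n,9)$ denotes the maximum size of a set of mutually unbiased weighing matrices of order $n$ and weight $9$. *)

(* Matrices over algC (algebraic complex numbers), so that
   1/sqrt(k) makes sense; weighing matrices have entries in {1,-1,0}. *)
From HB Require Import structures.
From mathcomp Require Import all_boot all_order all_algebra all_field.
Set Implicit Arguments. Unset Strict Implicit. Unset Printing Implicit Defensive.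
Import Order.TTheory GRing.Theory Num.Theory.
Local Open Scope ring_scope.

Definition weighing (n k : nat) (W : 'M[algC]_n) : Prop :=
  (forall i j, W i j \in [:: 1; -1; 0]) /\ W *m W^T = (k%:R)%:M.

Definition unbiased (n k : nat) (W1 W2 : 'M[algC]_n) : Prop :=
  weighing k ((sqrtC (k%:R))^-1 *: (W1 *m W2^T)).

Definition MUWM_set (n k : nat) (S : seq 'M[algC]_n) : Prop :=
  uniq S /\ (forall W, W \in S -> weighing k W) /\
  (forall W1 W2, W1 \in S -> W2 \in S -> W1 != W2 -> unbiased k W1 W2).

(* "W_max(n,k) lies in {a,...,b}": some set of size a exists (hence a set of
   every size <= a) and every such set has size at most b. *)
Definition Wmax_in (n k a b : nat) : Prop :=
  (exists S : seq 'M[algC]_n, MUWM_set k S /\ size S = a) /\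
  (forall S : seq 'M[algC]_n, MUWM_set k S -> (size S <= b)%N).

From mathcomp Require Import all_boot all_order all_algebra all_field.
From mathcomp Require Import ring lra zify.
Set Implicit Arguments. Unset Strict Implicit. Unset Printing Implicit Defensive.
Import Order.TTheory GRing.Theory Num.Theory.
Local Open Scope ring_scope.

(* The lower bound is witnessed by four explicit integer matrices, checked by
   computation.
   For the upper bound let W_1, ..., W_m be mutually unbiased weighing matrices
   of order n and weight a = d^2. Together with d I their rows form m + 1 blocks
   of n pairwise orthogonal vectors of squared norm a, and the inner product of
   two vectors from different blocks lies in {0, d, -d}. Send every such vector
   x to the traceless symmetric matrix n x x^T - a I. These matrices live in a
   space of dimension n (n + 1) / 2, so by Cauchy-Schwarz the sum of the squared
   entries of their Gram matrix is at least the squared trace divided by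
   n (n + 1) / 2. Both sides only depend on the known inner products, which gives
     (m + 1) (n - 1)^2 a^2 <= n (n + 1) / 2 ((n - 1) a^2 + m (n a - a^2)),
   i.e. m <= 34 for n = 20, d = 3. The entries involved are integers, so all
   inequalities are proved over rat, where the order is total. *)

Lemma sumr_delta (R : pzSemiRingType) (I : finType) (i : I) (F : I -> R) :
  \sum_j (i == j)%:R * F j = F i.
Proof.
rewrite (bigD1 i) //= eqxx mul1r big1 ?addr0 // => j /negbTE.
by rewrite eq_sym => ->; rewrite mul0r.
Qed.

Lemma sum_sqr_dot_exchange (R : comPzRingType) (I A : finType) (v : I -> A -> R) :
  \sum_i \sum_j (\sum_a v i a * v j a) ^+ 2 =
  \sum_a \sum_b (\sum_i v i a * v i b) ^+ 2.
Proof.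
pose t i j a b := (v i a * v i b) * (v j a * v j b).
transitivity (\sum_i \sum_j \sum_a \sum_b t i j a b).
  apply: eq_bigr => i _; apply: eq_bigr => j _; rewrite expr2 big_distrlr /=.
  by apply: eq_bigr => a _; apply: eq_bigr => b _; rewrite /t; ring.
transitivity (\sum_a \sum_b \sum_i \sum_j t i j a b); last first.
  by apply: eq_bigr => a _; apply: eq_bigr => b _; rewrite expr2 big_distrlr.
under eq_bigr do rewrite exchange_big.
rewrite exchange_big; apply: eq_bigr => a _.
under eq_bigr do rewrite exchange_big.
by rewrite exchange_big.
Qed.

Lemma sqr_sum_le_weighted (R : realFieldType) (A : finType) (w k : A -> R) :
  (forall a, 0 < w a) ->
  (\sum_a k a) ^+ 2 <= (\sum_a (w a)^-1) * \sum_a w a * k a ^+ 2.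
Proof.
move=> w_gt0; have w_neq0 a : w a != 0 by rewrite gt_eqF.
have amgm a b : 2 * (k a * k b) <= w a * k a ^+ 2 / w b + w b * k b ^+ 2 / w a.
  rewrite -subr_ge0.
  have -> : w a * k a ^+ 2 / w b + w b * k b ^+ 2 / w a - 2 * (k a * k b) =
            (w a * k a - w b * k b) ^+ 2 / (w a * w b).
    by field; rewrite !w_neq0.
  by rewrite divr_ge0 ?sqr_ge0 ?mulr_ge0 ?ltW.
have DT : (\sum_a (w a)^-1) * \sum_a w a * k a ^+ 2 =
          \sum_a \sum_b w a * k a ^+ 2 / w b by rewrite mulrC big_distrlr.
rewrite -(ler_pM2l (ltr0Sn _ 1)) expr2 big_distrlr mulr_sumr mulr2n mulrDl mul1r.
rewrite {1}DT {}DT [X in _ <= _ + X]exchange_big -big_split /=.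
apply: ler_sum => a _; rewrite mulr_sumr -big_split /=.
by apply: ler_sum => b _; apply: amgm.
Qed.

Lemma weighted_diag_le_sum_sqr (R : realDomainType) (A : finType)
    (sw : A -> A) (K : A -> A -> R) :
  (forall a, K a (sw a) = K a a) ->
  \sum_a (1 + (sw a != a)%:R) * K a a ^+ 2 <= \sum_a \sum_b K a b ^+ 2.
Proof.
move=> Ksw; apply: ler_sum => a _; rewrite (bigD1 a) //=.
have sum_ge0 P : 0 <= \sum_(b | P b) K a b ^+ 2 by apply: sumr_ge0 => b _; apply: sqr_ge0.
have [_|swa_neq] := eqVneq (sw a) a; first by rewrite addr0 mul1r lerDl.
rewrite (bigD1 (sw a)) /=; last by rewrite swa_neq.
by rewrite Ksw mulrDl mul1r lerD2l lerDl.
Qed.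

Lemma sum_inv_transpose_weight (R : numFieldType) n :
  \sum_(pq : 'I_n * 'I_n) (1 + ((pq.2, pq.1) != pq)%:R)^-1 = (n * n.+1)%:R / 2 :> R.
Proof.
rewrite -(pair_bigA _ (fun p q => (1 + (((q, p) : 'I_n * 'I_n) != (p, q))%:R)^-1)) /=.
transitivity (\sum_(p < n) (1 + (n.-1)%:R / 2 : R)).
  apply: eq_bigr => p _; rewrite (bigD1 p) //= eqxx addr0 invr1; congr (_ + _).
  rewrite (eq_bigr (fun _ => 2^-1)) => [|q q_neq_p].
    by rewrite sumr_const cardC1 card_ord mulr_natl.
  by rewrite xpair_eqE (negbTE q_neq_p).
rewrite sumr_const card_ord; case: n => [|n] /=; first by rewrite mul0r.
by rewrite -[_ *+ _]mulr_natl natrM; field.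
Qed.

Lemma dot_traceless_outer (R : comPzRingType) (I : finType) n
    (x : I -> 'I_n -> R) (a : R) :
  (forall i, \sum_p x i p ^+ 2 = a) -> forall i j,
  \sum_p \sum_q (n%:R * (x i p * x i q) - a * (p == q)%:R) *
                (n%:R * (x j p * x j q) - a * (p == q)%:R)
  = n%:R * (n%:R * (\sum_p x i p * x j p) ^+ 2 - a ^+ 2).
Proof.
move=> norm_x i j; set g := \sum_p x i p * x j p.
have sqr_x l : \sum_p x l p * x l p = a by rewrite -(norm_x l); apply: eq_bigr => p _.
transitivity (\sum_p (n%:R ^+ 2 * (x i p * x j p) * g -
    (n%:R * a * (x j p * x j p) + n%:R * a * (x i p * x i p) - a ^+ 2))).
  apply: eq_bigr => p _; rewrite -(sumr_delta p (fun q =>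
    n%:R * a * (x j p * x j q) + n%:R * a * (x i p * x i q) - a ^+ 2)).
  rewrite /g mulr_sumr -sumrB; apply: eq_bigr => q _.
  by case: eqVneq => [<-|_] /=; ring.
rewrite sumrB -mulr_suml !big_split /= -!mulr_sumr sqr_x -/g sqr_x.
by rewrite sumr_const card_ord -mulr_natr; ring.
Qed.

Lemma frame_potential_ge (R : realFieldType) (I : finType) n
    (x : I -> 'I_n -> R) (a : R) :
  (forall i, \sum_p x i p ^+ 2 = a) ->
  (#|I|%:R * (n%:R * (n%:R * a ^+ 2 - a ^+ 2))) ^+ 2 <=
  (n * n.+1)%:R / 2 *
  \sum_i \sum_j (n%:R * (n%:R * (\sum_p x i p * x j p) ^+ 2 - a ^+ 2)) ^+ 2.
Proof.
move=> norm_x.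
pose v i (pq : 'I_n * 'I_n) := n%:R * (x i pq.1 * x i pq.2) - a * (pq.1 == pq.2)%:R.
have dot_v i j : \sum_pq v i pq * v j pq =
                 n%:R * (n%:R * (\sum_p x i p * x j p) ^+ 2 - a ^+ 2).
  rewrite -(dot_traceless_outer norm_x).
  by rewrite -(pair_bigA _ (fun p q => v i (p, q) * v j (p, q))).
under [X in _ <= _ * X]eq_bigr do under eq_bigr do rewrite -dot_v.
rewrite sum_sqr_dot_exchange.
pose K pq rs := \sum_i v i pq * v i rs.
pose sw (pq : 'I_n * 'I_n) := (pq.2, pq.1).
have K_sw pq : K pq (sw pq) = K pq pq.
  apply: eq_bigr => i _; congr (_ * _); rewrite /v /= eq_sym; congr (_ - _); ring.
(* Cauchy-Schwarz on the diagonal of K, an off-diagonal entry counting for its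
   transpose as well; the reciprocal weights add up to n (n + 1) / 2. *)
have w_gt0 pq : 0 < 1 + (sw pq != pq)%:R :> R by rewrite ltr_wpDr ?ler0n.
have trace_K : \sum_pq K pq pq = #|I|%:R * (n%:R * (n%:R * a ^+ 2 - a ^+ 2)).
  rewrite exchange_big /= mulr_natl -sumr_const; apply: eq_bigr => i _.
  by rewrite dot_v -(norm_x i).
rewrite -trace_K; apply: le_trans (sqr_sum_le_weighted (fun pq => K pq pq) w_gt0) _.
rewrite sum_inv_transpose_weight ler_wpM2l ?divr_ge0 ?ler0n //.
exact: weighted_diag_le_sum_sqr.
Qed.

Lemma trmx_mul_scalar (F : fieldType) n (A : 'M[F]_n) (a : F) :
  a != 0 -> A *m A^T = a%:M -> A^T *m A = a%:M.
Proof.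
move=> a_neq0 AAt; have : (a^-1 *: A) *m A^T = 1%:M.
  by rewrite -scalemxAl AAt scale_scalar_mx mulVf.
move/mulmx1C; rewrite -scalemxAr => /(congr1 (fun M => a *: M)).
by rewrite scalerA mulfV // scale1r => ->; rewrite scale_scalar_mx mulr1.
Qed.

Lemma sum_sqr_mul_tr (R : comPzRingType) n (A C : 'M[R]_n) (a : R) p :
  A *m A^T = a%:M -> C^T *m C = a%:M ->
  \sum_q ((A *m C^T) p q) ^+ 2 = a ^+ 2.
Proof.
move=> AAt CtC; have : (A *m C^T) *m (A *m C^T)^T = (a ^+ 2)%:M.
  by rewrite trmx_mul trmxK mulmxA -(mulmxA A) CtC mul_mx_scalar -scalemxAl AAt
             scale_scalar_mx expr2.
move/(congr1 (fun M : 'M[R]_n => M p p)); rewrite [RHS]mxE eqxx mulr1n => <-.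
by rewrite [RHS]mxE; apply: eq_bigr => q _; rewrite [_^T q p]mxE expr2.
Qed.

Section UnbiasedBlocks.

Variables (R : realFieldType) (n : nat) (a : R).

(* [dev g] is the squared inner product of n x x^T - a I and n y y^T - a I
   when |x|^2 = |y|^2 = a and <x, y> = g. *)
Local Notation dev g := ((n%:R * (n%:R * g ^+ 2 - a ^+ 2)) ^+ 2).

Lemma sum_dev_orthogonal (p : 'I_n) :
  \sum_q dev ((a%:M : 'M[R]_n) p q) = n%:R ^+ 3 * (n%:R - 1) * a ^+ 4.
Proof.
rewrite (bigD1 p) //= mxE eqxx mulr1n (eq_bigr (fun _ => dev 0)) => [|q]; last first.
  by rewrite mxE eq_sym => /negbTE ->.
have n_gt0 : (0 < n)%N by apply: leq_ltn_trans (ltn_ord p).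
rewrite sumr_const cardC1 card_ord -[_ *+ n.-1]mulr_natr -subn1 natrB //; ring.
Qed.

Lemma sum_dev_unbiased (c : R) (g : 'I_n -> R) :
  \sum_q g q ^+ 2 = a ^+ 2 -> (forall q, g q ^+ 2 \in [:: 0; c]) ->
  \sum_q dev (g q) = n%:R ^+ 3 * a ^+ 2 * (n%:R * c - a ^+ 2).
Proof.
move=> norm_g g_sqr.
have g4 q : g q ^+ 4 = c * g q ^+ 2.
  rewrite -[4%N]/(2 * 2)%N exprM.
  by have := g_sqr q; rewrite !inE => /pred2P[]->; rewrite ?expr0n ?mulr0 // expr2.
have dev_g q : dev (g q) =
    n%:R ^+ 2 * ((n%:R ^+ 2 * c - 2 * n%:R * a ^+ 2) * g q ^+ 2 + a ^+ 4).
  by rewrite mulrBl -(mulrA _ c) -g4; ring.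
rewrite (eq_bigr _ (fun q _ => dev_g q)) -mulr_sumr big_split /= -mulr_sumr norm_g.
by rewrite sumr_const card_ord -mulr_natr; ring.
Qed.

Variables (I : finType) (B : I -> 'M[R]_n) (c : R).
Hypothesis a_neq0 : a != 0.
Hypothesis B_orth : forall s, B s *m (B s)^T = a%:M.
Hypothesis B_unbiased :
  forall s t p q, s != t -> ((B s *m (B t)^T) p q) ^+ 2 \in [:: 0; c].

Lemma sum_dev_row s p :
  \sum_(tq : I * 'I_n) dev ((B s *m (B tq.1)^T) p tq.2) =
  n%:R ^+ 3 * a ^+ 2 * ((n%:R - 1) * a ^+ 2 + (#|I|%:R - 1) * (n%:R * c - a ^+ 2)).
Proof.
rewrite -(pair_bigA _ (fun t q => dev ((B s *m (B t)^T) p q))) (bigD1 s) //=.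
rewrite B_orth sum_dev_orthogonal.
rewrite (eq_bigr (fun _ => n%:R ^+ 3 * a ^+ 2 * (n%:R * c - a ^+ 2))).
  have I_gt0 : (0 < #|I|)%N by apply/card_gt0P; exists s.
  by rewrite sumr_const cardC1 -[_ *+ #|I|.-1]mulr_natr -subn1 natrB //; ring.
move=> t t_neq_s; apply: sum_dev_unbiased => [|q]; last by apply: B_unbiased; rewrite eq_sym.
exact/sum_sqr_mul_tr/trmx_mul_scalar.
Qed.

Lemma unbiased_blocks_bound :
  (0 < #|I|)%N -> (0 < n)%N ->
  #|I|%:R * ((n%:R - 1) ^+ 2 * a ^+ 2) <=
  (n * n.+1)%:R / 2 * ((n%:R - 1) * a ^+ 2 + (#|I|%:R - 1) * (n%:R * c - a ^+ 2)).
Proof.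
move=> I_gt0 n_gt0; set rho := (_ - 1) * _ + _.
pose x (sp : I * 'I_n) q := B sp.1 sp.2 q.
have dot_x i j : \sum_q x i q * x j q = (B i.1 *m (B j.1)^T) i.2 j.2.
  by rewrite mxE; apply: eq_bigr => q _; rewrite mxE.
have norm_x i : \sum_q x i q ^+ 2 = a.
  by under eq_bigr do rewrite expr2; rewrite dot_x B_orth mxE eqxx mulr1n.
have := frame_potential_ge norm_x.
have -> : \sum_i \sum_j dev (\sum_q x i q * x j q) =
          (#|I| * n)%:R * (n%:R ^+ 3 * a ^+ 2 * rho).
  transitivity (\sum_(i : I * 'I_n) n%:R ^+ 3 * a ^+ 2 * rho).
    apply: eq_bigr => i _; rewrite -(sum_dev_row i.1 i.2).
    by apply: eq_bigr => j _; rewrite dot_x.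
  by rewrite sumr_const card_prod card_ord mulr_natl.
have P_gt0 : 0 < #|I|%:R * n%:R ^+ 4 * a ^+ 2.
  have a2_gt0 : 0 < a ^+ 2 by rewrite lt0r sqrf_eq0 a_neq0 sqr_ge0.
  by rewrite mulr_gt0 // mulr_gt0 ?exprn_gt0 ?ltr0n.
rewrite card_prod card_ord natrM => key; rewrite -(ler_pM2l P_gt0).
lra.
Qed.

End UnbiasedBlocks.

Section WeighingMatrices.

Variables (n d : nat).
Hypothesis d_gt0 : (0 < d)%N.

Local Notation k := (d ^ 2)%N.

Lemma sqrtC_natr_sqr : sqrtC (k%:R : algC) = d%:R.
Proof. by rewrite natrX sqrCK ?ler0n. Qed.

Lemma natr_sqr_neq0 (R : numDomainType) : (k%:R : R) != 0.
Proof. by rewrite pnatr_eq0 -lt0n expn_gt0 d_gt0. Qed.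

Lemma weighing_Crat (W : 'M[algC]_n) i j : weighing k W -> W i j \in Crat.
Proof.
by case=> /(_ i j); rewrite !inE => /or3P[] /eqP-> _; rewrite ?rpredN ?rpred1 ?rpred0.
Qed.

Lemma weighing_trmx_mul (W : 'M[algC]_n) : weighing k W -> W^T *m W = k%:R%:M.
Proof. by case=> _; apply: trmx_mul_scalar (natr_sqr_neq0 _). Qed.

Lemma mem_scaled_signs (c y : algC) : c != 0 ->
  (c * y \in [:: c; -c; 0]) = (y \in [:: 1; -1; 0]).
Proof.
move=> c_neq0; have -> : [:: c; -c; 0] = map ( *%R c) [:: 1; -1; 0].
  by rewrite /= mulr1 mulrN1 mulr0.
by rewrite mem_map //; apply: mulfI.
Qed.

Lemma unbiasedP (W1 W2 : 'M[algC]_n) : weighing k W1 -> weighing k W2 ->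
  unbiased k W1 W2 <-> forall i j, (W1 *m W2^T) i j \in [:: d%:R; -d%:R; 0].
Proof.
move=> [_ W1W1t] W2w; have d_neq0 : (d%:R : algC) != 0 by rewrite pnatr_eq0 -lt0n.
rewrite /unbiased /weighing sqrtC_natr_sqr.
have -> : (d%:R^-1 *: (W1 *m W2^T)) *m (d%:R^-1 *: (W1 *m W2^T))^T = k%:R%:M.
  rewrite linearZ /= -scalemxAl -scalemxAr scalerA trmx_mul trmxK mulmxA -(mulmxA W1).
  rewrite (weighing_trmx_mul W2w) mul_mx_scalar -scalemxAl W1W1t !scale_scalar_mx.
  by congr _%:M; rewrite natrX; field.
split=> [[entries _] i j | entries]; last split=> // i j.
  by have := entries i j; rewrite mxE -(mem_scaled_signs _ d_neq0) mulVKf.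
by rewrite mxE -(mem_scaled_signs _ d_neq0) mulVKf.
Qed.

Definition ratmx (W : 'M[algC]_n) : 'M[rat]_n := map_mx getCrat W.

Lemma ratmxK (W : 'M[algC]_n) :
  (forall i j, W i j \in Crat) -> map_mx ratr (ratmx W) = W.
Proof. by move=> W_rat; apply/matrixP=> i j; rewrite !mxE getCratK. Qed.

Lemma sqr_mem_of_ratr (g : rat) :
  (ratr g : algC) \in [:: d%:R; -d%:R; 0] -> g ^+ 2 \in [:: 0; k%:R].
Proof.
rewrite !inE => /or3P[] /eqP ratr_g; apply/orP; [right | right | left];
  apply/eqP/(fmorph_inj (@ratr algC));
  by rewrite rmorphXn /= ratr_g ?rmorph0 ?ratr_nat ?natrX ?sqrrN ?expr0n.
Qed.

Variable S : seq 'M[algC]_n.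
Hypothesis S_mub : MUWM_set k S.

(* d I is unbiased with every weighing matrix of weight d^2. *)
Local Notation T := (d%:R%:M :: S).

Lemma padded_mul_tr W : W \in T -> W *m W^T = k%:R%:M /\ forall i j, W i j \in Crat.
Proof.
rewrite inE => /predU1P[->|W_S]; last by have [_ [/(_ W W_S) W_w _]] := S_mub;
  split=> [|i j]; [case: W_w | exact: weighing_Crat W_w].
split=> [|i j]; first by rewrite tr_scalar_mx mul_scalar_mx scale_scalar_mx natrX.
by rewrite mxE rpredMn ?rpred_nat.
Qed.

Lemma padded_unbiased (s t : 'I_(size T)) i j : s != t ->
  (nth 0 T s *m (nth 0 T t)^T) i j \in [:: d%:R; -d%:R; 0].
Proof.
have [S_uniq [S_w S_unb]] := S_mub.
have d_neq0 : (d%:R : algC) != 0 by rewrite pnatr_eq0 -lt0n.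
have nth_w l : (l < size S)%N -> weighing k (nth 0 S l) by move=> l_lt; apply/S_w/mem_nth.
case: s t => -[|ls] ls_lt [[|lt] lt_lt] //= st_neq.
- rewrite mul_scalar_mx !mxE; have [/(_ j i) W_ji _] := nth_w lt lt_lt.
  by move: W_ji; rewrite -(mem_scaled_signs _ d_neq0).
- rewrite tr_scalar_mx mul_mx_scalar mxE; have [/(_ i j) W_ij _] := nth_w ls ls_lt.
  by move: W_ij; rewrite -(mem_scaled_signs _ d_neq0) mulrC.
- have [unb_entries _] := unbiasedP (nth_w ls ls_lt) (nth_w lt lt_lt).
  by apply: unb_entries; apply: S_unb; rewrite ?mem_nth // nth_uniq.
Qed.

Lemma MUWM_size_bound : (0 < n)%N ->
  (size S).+1%:R * ((n%:R - 1) ^+ 2 * k%:R ^+ 2) <=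
  (n * n.+1)%:R / 2 * ((n%:R - 1) * k%:R ^+ 2 + (size S)%:R * (n%:R * k%:R - k%:R ^+ 2))
  :> rat.
Proof.
move=> n_gt0; pose B (s : 'I_(size T)) := ratmx (nth 0 T s).
have B_mul s t : map_mx ratr (B s *m (B t)^T) = nth 0 T s *m (nth 0 T t)^T.
  have ratrB u : map_mx ratr (B u) = nth 0 T u.
    by apply: ratmxK; have [_] := padded_mul_tr (mem_nth 0 (ltn_ord u)).
  by rewrite map_mxM -map_trmx !ratrB.
have := @unbiased_blocks_bound _ _ k%:R _ B k%:R.
rewrite card_ord /= -natr1 addrK; apply=> //; first exact: natr_sqr_neq0.
  move=> s; apply: (@map_mx_inj _ _ (@ratr algC)).
  rewrite B_mul map_scalar_mx /= ratr_nat.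
  by have [] := padded_mul_tr (@mem_nth _ 0 T s (ltn_ord s)).
move=> s t p q st_neq; apply: sqr_mem_of_ratr.
have /(congr1 (fun M : 'M_n => M p q)) := B_mul s t; rewrite mxE => ->.
exact: padded_unbiased.
Qed.

End WeighingMatrices.

Lemma not_unbiased_self n d (W : 'M[algC]_n) (i : 'I_n) :
  (1 < d)%N -> weighing (d ^ 2) W -> ~ unbiased (d ^ 2) W W.
Proof.
move=> d_gt1 W_w /(unbiasedP (ltnW d_gt1) W_w W_w) /(_ i i); case: W_w => _ ->.
rewrite mxE eqxx mulr1n !inE eqr_nat pnatr_eq0 -mulnn -subr_eq0 opprK -natrD pnatr_eq0.
by apply/negP; rewrite !negb_or; apply/and3P; split; apply/eqP; nia.
Qed.

(* [i] only witnesses that n > 0. *)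
Lemma MUWM_set_map n d (T : eqType) (f : T -> 'M[algC]_n) (ts : seq T) (i : 'I_n) :
  (1 < d)%N -> uniq ts -> (forall t, t \in ts -> weighing (d ^ 2) (f t)) ->
  (forall t u, t \in ts -> u \in ts -> t != u -> unbiased (d ^ 2) (f t) (f u)) ->
  MUWM_set (d ^ 2) (map f ts).
Proof.
move=> d_gt1 ts_uniq ts_w ts_unb; split; last split.
- rewrite map_inj_in_uniq // => t u t_ts u_ts ftu; apply/eqP; apply: contraT => tu_neq.
  by case: (not_unbiased_self i d_gt1 (ts_w u u_ts)); rewrite -{1}ftu; apply: ts_unb.
- by move=> _ /mapP[t t_ts ->]; apply: ts_w.
- move=> _ _ /mapP[t t_ts ->] /mapP[u u_ts ->] ftu_neq; apply: ts_unb => //.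
  by apply: contraNneq ftu_neq => ->.
Qed.

Section IntegerTables.

Variable n : nat.

Definition table_entry (t : seq (seq int)) (i j : nat) : int := nth 0 (nth [::] t i) j.

Definition mx_of_table (t : seq (seq int)) : 'M[algC]_n :=
  \matrix_(i, j) (table_entry t i j)%:~R.

Definition table_dot (t u : seq (seq int)) (i j : nat) : int :=
  foldr (fun l acc => table_entry t i l * table_entry u j l + acc) 0 (iota 0 n).

Definition all_index_pairs (P : nat -> nat -> bool) : bool :=
  all (fun i => all (P i) (iota 0 n)) (iota 0 n).

Definition weighing_table (k : nat) (t : seq (seq int)) : bool :=
  all_index_pairs (fun i j => (table_dot t t i j == (i == j)%:R * k%:R) &&
                              (table_entry t i j \in [:: 1; -1; 0])).

Definition unbiased_tables (d : nat) (t u : seq (seq int)) : bool :=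
  all_index_pairs (fun i j => table_dot t u i j \in [:: d%:R; -d%:R; 0]).

Lemma all_index_pairsP P (i j : 'I_n) : all_index_pairs P -> P i j.
Proof.
move=> /allP /(_ i); rewrite mem_iota ltn_ord => /(_ isT) /allP /(_ j).
by rewrite mem_iota ltn_ord; apply.
Qed.

Lemma mul_mx_of_table t u (i j : 'I_n) :
  (mx_of_table t *m (mx_of_table u)^T) i j = (table_dot t u i j)%:~R.
Proof.
have -> : table_dot t u i j = \sum_(l <- index_iota 0 n) table_entry t i l * table_entry u j l.
  rewrite /table_dot /index_iota subn0.
  by elim: (iota 0 n) => [|l s IH] /=; rewrite ?big_nil ?big_cons ?IH.
rewrite big_mkord rmorph_sum mxE; apply: eq_bigr => l _.
by rewrite !mxE rmorphM.
Qed.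

Lemma weighing_of_table k t : weighing_table k t -> weighing k (mx_of_table t).
Proof.
move=> t_w; split=> [i j | ].
  have /andP[_ t_entry] := all_index_pairsP i j t_w.
  by move: t_entry; rewrite mxE !inE => /or3P[] /eqP->; rewrite ?rmorphN ?rmorph1 ?eqxx ?orbT.
apply/matrixP=> i j; have /andP[/eqP t_dot _] := all_index_pairsP i j t_w.
by rewrite mul_mx_of_table mxE t_dot rmorphM !rmorph_nat mulr_natl.
Qed.

Lemma unbiased_of_tables d t u : (0 < d)%N ->
  weighing_table (d ^ 2) t -> weighing_table (d ^ 2) u -> unbiased_tables d t u ->
  unbiased (d ^ 2) (mx_of_table t) (mx_of_table u).
Proof.
move=> d_gt0 t_w u_w tu_unb.
apply/(unbiasedP d_gt0 (weighing_of_table t_w) (weighing_of_table u_w)) => i j.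
move: (all_index_pairsP i j tu_unb); rewrite mul_mx_of_table !inE.
by case/or3P=> /eqP->; rewrite ?rmorphN ?rmorph_nat ?rmorph0 eqxx ?orbT.
Qed.

Definition MUWM_tables (d : nat) (ts : seq (seq (seq int))) : bool :=
  [&& uniq ts, all (weighing_table (d ^ 2)) ts &
      all (fun t => all (fun u => (t == u) || unbiased_tables d t u) ts) ts].

Lemma MUWM_set_of_tables d ts (i : 'I_n) : (1 < d)%N -> MUWM_tables d ts ->
  MUWM_set (d ^ 2) (map mx_of_table ts).
Proof.
move=> d_gt1 /and3P[ts_uniq /allP ts_w /allP ts_unb].
apply: (MUWM_set_map i d_gt1 ts_uniq) => [t /ts_w /weighing_of_table //|t u t_ts u_ts tu_neq].
have /allP /(_ u u_ts) := ts_unb t t_ts; rewrite (negbTE tu_neq) /=.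
by move=> tu_unb; apply: (unbiased_of_tables (ltnW d_gt1) (ts_w t t_ts) (ts_w u u_ts)).
Qed.

End IntegerTables.

(* [table1] is the direct sum of two conference matrices of order 10. *)
Definition table1 : seq (seq int) := [::
  [::  0;  1;  1;  1;  1;  1;  1;  1;  1;  1;  0;  0;  0;  0;  0;  0;  0;  0;  0;  0];
  [::  1;  0;  1;  1;  1;  1; -1; -1; -1; -1;  0;  0;  0;  0;  0;  0;  0;  0;  0;  0];
  [::  1;  1;  0;  1; -1; -1;  1;  1; -1; -1;  0;  0;  0;  0;  0;  0;  0;  0;  0;  0];
  [::  1;  1;  1;  0; -1; -1; -1; -1;  1;  1;  0;  0;  0;  0;  0;  0;  0;  0;  0;  0];
  [::  1;  1; -1; -1;  0;  1;  1; -1;  1; -1;  0;  0;  0;  0;  0;  0;  0;  0;  0;  0];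
  [::  1;  1; -1; -1;  1;  0; -1;  1; -1;  1;  0;  0;  0;  0;  0;  0;  0;  0;  0;  0];
  [::  1; -1;  1; -1;  1; -1;  0;  1;  1; -1;  0;  0;  0;  0;  0;  0;  0;  0;  0;  0];
  [::  1; -1;  1; -1; -1;  1;  1;  0; -1;  1;  0;  0;  0;  0;  0;  0;  0;  0;  0;  0];
  [::  1; -1; -1;  1;  1; -1;  1; -1;  0;  1;  0;  0;  0;  0;  0;  0;  0;  0;  0;  0];
  [::  1; -1; -1;  1; -1;  1; -1;  1;  1;  0;  0;  0;  0;  0;  0;  0;  0;  0;  0;  0];
  [::  0;  0;  0;  0;  0;  0;  0;  0;  0;  0;  0;  1;  1;  1;  1;  1;  1;  1;  1;  1];
  [::  0;  0;  0;  0;  0;  0;  0;  0;  0;  0;  1;  0;  1;  1;  1;  1; -1; -1; -1; -1];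
  [::  0;  0;  0;  0;  0;  0;  0;  0;  0;  0;  1;  1;  0;  1; -1; -1;  1;  1; -1; -1];
  [::  0;  0;  0;  0;  0;  0;  0;  0;  0;  0;  1;  1;  1;  0; -1; -1; -1; -1;  1;  1];
  [::  0;  0;  0;  0;  0;  0;  0;  0;  0;  0;  1;  1; -1; -1;  0;  1;  1; -1;  1; -1];
  [::  0;  0;  0;  0;  0;  0;  0;  0;  0;  0;  1;  1; -1; -1;  1;  0; -1;  1; -1;  1];
  [::  0;  0;  0;  0;  0;  0;  0;  0;  0;  0;  1; -1;  1; -1;  1; -1;  0;  1;  1; -1];
  [::  0;  0;  0;  0;  0;  0;  0;  0;  0;  0;  1; -1;  1; -1; -1;  1;  1;  0; -1;  1];
  [::  0;  0;  0;  0;  0;  0;  0;  0;  0;  0;  1; -1; -1;  1;  1; -1;  1; -1;  0;  1];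
  [::  0;  0;  0;  0;  0;  0;  0;  0;  0;  0;  1; -1; -1;  1; -1;  1; -1;  1;  1;  0]]%Z.

Definition table2 : seq (seq int) := [::
  [::  0;  0;  1;  1;  0;  1; -1;  1;  0;  0;  0;  1; -1;  0;  0; -1;  0;  1;  0;  0];
  [::  1;  1;  0;  0;  0; -1;  0;  0;  1; -1; -1;  1;  0;  0;  0;  0;  1;  0;  0;  1];
  [::  0;  0;  1;  1;  1;  0;  1; -1;  0;  0; -1;  0;  0; -1;  0;  0;  0;  0; -1; -1];
  [::  0;  1; -1;  0; -1;  0;  1;  0;  0;  0;  0;  1;  0;  0; -1; -1; -1;  0;  0; -1];
  [::  0;  1;  0;  0;  0;  1; -1;  0; -1;  0; -1;  0;  1;  1;  0;  0;  0; -1; -1;  0];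
  [::  0;  1;  0;  0;  1;  0;  0; -1;  0; -1;  1;  0; -1;  1;  1;  0; -1;  0;  0;  0];
  [::  0;  0;  0;  0;  1; -1;  0;  0; -1;  1;  0;  1;  1;  0;  1; -1;  0;  0;  1;  0];
  [::  1;  0;  0; -1;  0; -1; -1;  0;  0;  0;  0; -1;  0;  0;  0; -1;  0;  1; -1; -1];
  [::  1;  0;  0;  1;  0;  0;  0;  0;  1;  1;  1;  0;  0;  1;  0;  0;  1; -1;  0; -1];
  [::  0;  1; -1;  1;  1;  0;  0;  0;  0;  1;  0; -1;  0;  0; -1;  0;  0;  1;  0;  1];
  [::  1;  1;  0;  0; -1;  0;  0;  0; -1;  1;  0;  0; -1; -1;  1;  1;  0;  0;  0;  0];
  [::  1;  0;  0;  0;  0;  1; -1; -1;  1;  0;  0;  0;  1; -1;  0;  0; -1;  0;  1;  0];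
  [::  0;  0;  0;  1;  0; -1; -1;  0; -1; -1;  0;  0;  0;  0; -1;  1;  0;  0;  1; -1];
  [::  0;  1;  1; -1;  1;  0;  0;  1;  0;  0;  1;  0;  0; -1; -1;  0;  0; -1;  0;  0];
  [::  0;  0;  1; -1;  0;  0;  0; -1;  0;  1; -1;  0; -1;  1; -1;  0;  0;  0;  1;  0];
  [::  1;  0;  1;  0;  0;  0;  1;  1;  0;  0;  0;  0;  1;  1;  0;  1; -1;  1;  0;  0];
  [::  0;  0;  1;  1; -1; -1;  0;  0;  0;  0;  0; -1;  0;  0;  0; -1; -1; -1;  0;  1];
  [::  1; -1; -1;  0;  1;  0;  0;  1;  0;  0; -1;  0; -1;  0;  0;  0; -1; -1;  0;  0];
  [::  1; -1;  0;  0;  0;  0;  0; -1; -1;  0;  1;  1;  0;  0; -1;  0;  0;  0; -1;  1];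
  [::  1;  0;  0;  0;  0;  1;  1;  0; -1; -1;  0; -1;  0;  0;  0; -1;  1;  0;  1;  0]]%Z.

Definition table3 : seq (seq int) := [::
  [::  0;  0;  1;  0;  0; -1;  1;  0;  0; -1; -1;  0; -1;  0;  0;  0;  1;  0;  1; -1];
  [::  0;  0;  1; -1;  0;  0; -1;  0;  1;  0;  0; -1;  0; -1;  1; -1;  0; -1;  0;  0];
  [::  1;  0;  0;  1;  0;  0; -1;  1; -1;  0;  0;  0;  1;  0;  0; -1;  1;  0;  0; -1];
  [::  1;  0; -1;  1;  0;  1;  0; -1;  0;  0;  0;  0; -1;  0;  1;  0;  0; -1;  1;  0];
  [::  1; -1;  0;  0;  0;  0; -1;  0;  0; -1; -1;  0; -1;  0;  0;  0;  0;  1; -1;  1];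
  [::  0;  1;  1;  0; -1;  1;  0;  0;  0;  1; -1;  1;  0;  0;  0;  0;  1;  0;  0;  1];
  [::  1;  1;  1;  1;  0;  0;  0;  0;  0;  0;  0; -1;  0; -1; -1;  1; -1;  0;  0;  0];
  [::  0;  1;  0;  0;  1;  0; -1;  0;  1;  1;  0;  0; -1;  1;  0;  0;  0;  1;  0; -1];
  [::  0;  0;  0;  1;  0; -1;  0; -1;  1;  0;  0; -1;  1;  1;  0;  0;  1;  0;  0;  1];
  [::  1;  0;  1; -1;  1;  0;  0;  0; -1;  0;  1;  0;  0;  1;  0;  0;  0;  0;  1;  1];
  [::  0;  1;  0;  0;  0;  1;  1;  1;  0; -1;  0; -1;  0;  1;  1;  0;  0;  0; -1;  0];
  [::  1;  0;  0;  0; -1; -1;  1;  0;  0;  1;  1;  0; -1;  0;  0; -1;  0;  0; -1;  0];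
  [::  1;  0; -1; -1;  0;  0;  0;  1;  1;  0;  0;  0;  0;  0; -1;  1;  1; -1;  0;  0];
  [::  0;  0;  0;  0;  1; -1;  0;  0; -1;  1; -1;  0;  0;  0;  1;  1;  0; -1; -1;  0];
  [::  1;  0;  0; -1; -1;  0;  0; -1;  0;  0; -1;  0;  1;  1;  0;  0; -1;  0;  0; -1];
  [::  0;  1; -1;  0;  0; -1;  0;  1;  0;  0; -1;  0;  0;  0;  0; -1; -1;  0;  1;  1];
  [::  0;  1;  0;  0; -1; -1; -1;  0;  0; -1;  1;  1;  0;  0;  1;  1;  0;  0;  0;  0];
  [::  1;  0;  0;  0;  1;  0;  1;  0;  1;  0;  0;  1;  1; -1;  1;  0;  0;  1;  0;  0];
  [::  0;  1;  0;  0;  1;  0;  0; -1;  0; -1;  0;  1;  0;  0; -1; -1;  0; -1; -1;  0];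
  [::  0;  1; -1; -1;  0;  0;  0; -1; -1;  0;  0; -1;  0; -1;  0;  0;  1;  1;  0;  0]]%Z.

Definition table4 : seq (seq int) := [::
  [::  0;  1;  1;  0;  0;  0;  0;  0; -1; -1;  0; -1;  1; -1;  0; -1;  0;  0; -1;  0];
  [::  1;  0;  1; -1;  0;  1;  0;  0;  0; -1; -1;  0;  0;  1;  0;  1;  1;  0;  0;  0];
  [::  1; -1;  0;  0;  0;  0; -1;  0;  0; -1;  1;  0;  0;  0;  1;  0; -1; -1;  0;  1];
  [::  1;  0;  0;  1; -1;  1;  0;  0; -1;  0;  0;  0;  0;  0;  0;  0; -1;  1;  1; -1];
  [::  0;  1; -1; -1;  0;  0; -1;  0;  0; -1;  1;  0; -1;  0; -1;  0;  0;  0;  0; -1];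
  [::  1;  0;  0;  0;  0;  1;  0;  1;  0;  1;  1;  1;  0; -1;  0;  0;  1;  0; -1;  0];
  [::  0;  1;  1;  0;  0;  0; -1;  1;  0;  1;  0;  0;  0;  1;  0; -1;  0; -1;  1;  0];
  [::  0;  0;  0;  0;  1; -1; -1;  1;  0;  0;  0;  0;  1;  0;  1;  1;  0;  1;  0; -1];
  [::  1;  0;  0;  0; -1; -1;  0;  1;  1;  0;  0; -1;  0;  0; -1;  0;  0;  1;  0;  1];
  [::  0;  1;  0;  0;  1;  0;  1;  1; -1;  0;  0;  0; -1;  0;  0;  1; -1;  0;  0;  1];
  [::  0;  1;  0; -1; -1;  0;  0;  0;  1;  0; -1;  1;  0; -1;  1;  0; -1;  0;  0;  0];
  [::  0;  0;  1;  1; -1; -1;  0;  0;  0;  0;  0;  0; -1;  0;  0;  1;  0; -1; -1; -1];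
  [::  0;  0;  1; -1;  0;  0;  0; -1;  0;  1;  1;  0;  1;  0; -1;  1; -1;  0;  0;  0];
  [::  1;  0; -1;  0;  0; -1;  0;  0; -1;  0; -1;  1;  1;  0; -1;  0;  0; -1;  0;  0];
  [::  1;  0;  0;  0;  1;  0;  1;  0;  1;  0;  0; -1;  0; -1;  0;  0;  0; -1;  1; -1];
  [::  1;  0;  1;  0;  1; -1;  0; -1;  0;  0;  0;  1; -1;  0;  0; -1;  0;  1;  0;  0];
  [::  0;  0;  0;  1;  1;  1; -1;  0;  1;  0; -1;  0;  0;  0; -1;  0; -1;  0; -1;  0];
  [::  0;  1;  0;  1;  0;  0;  1;  0;  1; -1;  1;  1;  1;  1;  0;  0;  0;  0;  0;  0];
  [::  1;  1; -1;  0;  0;  0;  0; -1;  0;  1;  0; -1;  0;  1;  1;  0;  0;  0; -1;  0];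
  [::  0;  1;  0;  1;  0;  0; -1; -1;  0;  0;  0;  0;  0; -1;  0;  1;  1;  0;  1;  1]]%Z.

Lemma tables_MUWM : MUWM_tables 20 3 [:: table1; table2; table3; table4].
Proof. by vm_compute. Qed.

Theorem proposition6p9 : Wmax_in 20 9 4 34.
Proof.
split.
  exists (map (mx_of_table 20) [:: table1; table2; table3; table4]); split=> //.
  exact: (MUWM_set_of_tables ord0 _ tables_MUWM).
move=> S S_mub; have := @MUWM_size_bound 20 3 isT S S_mub isT.
rewrite -[(3 ^ 2)%N]/9%N -[(20 * 21)%N]/420%N -natr1 => bound.
rewrite leqNgt; apply/negP; rewrite -(ler_nat rat) => S_big.
lra.
Qed.
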